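(* Let $h$ be a positive integer and let $0<\beta<1$ be a real. There is a positive real $\alpha$ depending on $h$ and $\beta$ such that the following holds. Let $G$ be any graph on $n$ vertices and let $p=\frac{2e(G)}{n^2}$. For $i,j\in[h]$ let $\mathcal{A}_{i,j}$ denote the set of $i$-good sequences of length $j$ relative to $(\alpha,\beta,h,1)$ in $V(G)$. Then for all $i,j\in[h]$, \[\sum_{S\in\mathcal{A}_{i,j}}|N(S)|\geq(1-\beta)\,n^{j+1}p^j.\] In particular, there exists an $i$-good sequence $S$ of length $j$ such that $|N(S)|\ge(1-\beta)p^j n$.
   Context: All graphs are finite and simple. A sequence in a set $W$ is a finite sequence of elements of $W$ (repetitions allowed); its length $|S|$ counts multiplicity; $W^k$ denotes the set of sequences of length $k$ in $W$. For a sequence $S$ in $V(G)$, $N(S)$ is the set of vertices adjacent to every vertex of $S$. Goodness relative to $(\alpha,\beta,h,1)$, with $p=2e(G)/n^2$: a sequence $T$ in $V(G)$ is $0$-good if $|N(T)|\ge\alpha p^{|T|}n$; for $1\le i\le h$, a sequence $S$ in $V(G)$ of length at most $h$ is $i$-good if $S$ is $0$-good and for each $|S|\le k\le h$, the number of $(i-1)$-good sequences in $N(S)^k$ is at least $(1-\beta)|N(S)|^k$. *)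

From HB Require Import structures.
From mathcomp Require Import all_boot all_order all_algebra.
From mathcomp Require Import reals.
Set Implicit Arguments. Unset Strict Implicit. Unset Printing Implicit Defensive.
Import Order.TTheory GRing.Theory Num.Theory.
Local Open Scope ring_scope.

Section Goodness.
Variables (T : finType) (G : rel T).

Definition edges : {set {set T}} :=
  [set A : {set T} | [exists x, exists y, G x y && (A == [set x; y])]].

Definition nedges : nat := #|edges|.

Definition nbhd (S : seq T) : {set T} := [set v | all (fun u => G u v) S].

Variable R : realType.

Definition density : R := (2 * nedges)%:R / (#|T| ^ 2)%:R.

Variables (alpha beta : R) (h : nat).

Definition good0 (S : seq T) : bool :=
  alpha * density ^+ size S * #|T|%:R <= #|nbhd S|%:R.

Fixpoint good (i : nat) (S : seq T) {struct i} : bool :=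
  match i with
  | 0 => good0 S
  | i'.+1 =>
      [&& (size S <= h)%N,
          good0 S &
          [forall k : 'I_h.+1,
             (size S <= k)%N ==>
             ((1 - beta) * (#|nbhd S| ^ k)%:R
                <= #|[set t : k.-tuple T | all (fun u => u \in nbhd S) t
                                           && good i' t]|%:R)]]
  end.

End Goodness.

From mathcomp Require Import all_boot all_order all_algebra.
From mathcomp Require Import reals ring lra zify.
Set Implicit Arguments. Unset Strict Implicit. Unset Printing Implicit Defensive.
Import Order.TTheory GRing.Theory Num.Theory.
Local Open Scope ring_scope.

(* Write [d S = |N(S)|].  Double counting and the power-mean inequality give
   [\sum_(S in V^j) d S = \sum_v deg v ^ j >= n^(j+1) p^j], so it suffices to show
   that the sequences which are not [i]-good carry at most a [beta]-fraction of
   this mass.  By induction on [i], for [1 <= m <= j <= h] the sum of [d S ^ m]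
   over the non-[i]-good [S in V^j] is at most [t_i n^j (p^j n)^m], where
   [alpha = t_0 <= t_1 <= ... <= t_h = beta].  The [S] with [d S < gamma p^j n] carry at most a
   [gamma]-fraction of the mass; a non-[(i+1)]-good [S] with [d S >= gamma p^j n]
   has, for some [k >= j], more than [beta d(S)^k] non-[i]-good [k]-tuples [t] in
   [N(S)^k]; as [S] lies in [N(t)] for each of them, double counting bounds the
   total weight of such [S] by the sum of [d t ^ j] over non-[i]-good [t], which
   is the induction hypothesis.  The second claim follows by averaging over the
   [n^j] tuples. *)

Lemma chebyshev_sum_pow (R : realFieldType) (I : finType) (x : I -> R) q :
  (forall i, 0 <= x i) ->
  (\sum_i x i ^+ q) * (\sum_i x i) <= #|I|%:R * \sum_i x i ^+ q.+1.
Proof.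
move=> x_ge0.
have sum_ge0 : 0 <= \sum_u \sum_v (x u ^+ q - x v ^+ q) * (x u - x v).
  apply/sumr_ge0 => u _; apply/sumr_ge0 => v _.
  case/orP: (le_total (x u) (x v)) => [x_le|x_ge].
    by apply: mulr_le0; rewrite subr_le0 //; apply: (lerXn2r q); rewrite ?nnegrE.
  by apply: mulr_ge0; rewrite subr_ge0 //; apply: (lerXn2r q); rewrite ?nnegrE.
have split_uv u v : (x u ^+ q - x v ^+ q) * (x u - x v) =
    (x u ^+ q.+1 - x u ^+ q * x v) + (x v ^+ q.+1 - x v ^+ q * x u).
  by rewrite !exprS; ring.
have half : \sum_u \sum_v (x u ^+ q.+1 - x u ^+ q * x v) =
    #|I|%:R * \sum_i x i ^+ q.+1 - (\sum_i x i ^+ q) * (\sum_i x i).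
  under eq_bigr do rewrite sumrB sumr_const -mulr_sumr.
  by rewrite sumrB mulr_suml sumrMnl mulr_natl.
move: sum_ge0; under eq_bigr do under eq_bigr do rewrite split_uv.
under eq_bigr do rewrite big_split /=.
by rewrite big_split /= [X in _ + X]exchange_big /= half -mulr2n pmulrn_lge0 // subr_ge0.
Qed.

Lemma power_mean (R : realFieldType) (I : finType) (x : I -> R) q :
  (forall i, 0 <= x i) ->
  (\sum_i x i) ^+ q.+1 <= #|I|%:R ^+ q * \sum_i x i ^+ q.+1.
Proof.
move=> x_ge0; elim: q => [|q IHq]; first by rewrite expr0 mul1r.
have sum_ge0 : 0 <= \sum_i x i by apply: sumr_ge0.
rewrite exprS [#|I|%:R ^+ _]exprS -mulrA.
apply: le_trans (_ : _ <= (\sum_i x i) * (#|I|%:R ^+ q * \sum_i x i ^+ q.+1)) _.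
  exact: ler_wpM2l.
rewrite mulrCA [X in _ <= X]mulrCA ler_wpM2l ?exprn_ge0 //.
by rewrite mulrC chebyshev_sum_pow.
Qed.

Lemma ler_sum_card_mul (R : numDomainType) (I : finType) (P : pred I) (f : I -> R) c :
  (forall i, P i -> f i <= c) -> 0 <= c -> \sum_(i | P i) f i <= #|I|%:R * c.
Proof.
move=> f_le c_ge0; rewrite mulr_natl -sumr_const big_mkcond ler_sum // => i _.
by case: ifP => [/f_le|].
Qed.

Lemma exists_ge_of_card_mul_le (R : realDomainType) (I : finType) (P : pred I)
    (f : I -> R) c :
  (0 < #|I|)%N -> 0 < c -> #|I|%:R * c <= \sum_(i | P i) f i ->
  exists2 i, P i & c <= f i.
Proof.
move=> I_gt0 c_gt0 le_sum.
case: (pickP [pred i | P i && (c <= f i)]) => [i /andP [] | none]; first by exists i.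
suff : \sum_(i | P i) f i < #|I|%:R * c by rewrite ltNge le_sum.
rewrite mulr_natl -sumr_const big_mkcond; apply: ltr_sum => [|i _].
  by case/card_gt0P: I_gt0 => i _; apply/hasP; exists i; rewrite ?mem_index_enum.
by case: ifP => // P_i; have := none i; rewrite /= P_i /= ltNge => ->.
Qed.

Lemma ler_sum_cover (R : numDomainType) (I J : finType) (P : pred I)
    (Q : J -> pred I) (f : I -> R) :
  (forall i, 0 <= f i) -> (forall i, P i -> exists j, Q j i) ->
  \sum_(i | P i) f i <= \sum_(j : J) \sum_(i | Q j i) f i.
Proof.
move=> f_ge0 P_cover.
under [X in _ <= X]eq_bigr do rewrite big_mkcond /=.
rewrite exchange_big /= big_mkcond /=; apply: ler_sum => i _.
have sum_ge0 (A : pred J) : 0 <= \sum_(j | A j) (if Q j i then f i else 0).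
  by apply: sumr_ge0 => j _; case: ifP.
case: ifP => [/P_cover [j Q_ji] | _]; last exact: sum_ge0.
by rewrite (bigD1 j) //= Q_ji lerDl.
Qed.

Lemma expr_le_of_scaled_le (R : numDomainType) (g x y : R) (h k m : nat) :
  0 < g -> g <= 1 -> 0 <= x -> g * x <= y -> (m <= k <= h)%N ->
  g ^+ h * x ^+ (k - m) * y ^+ m <= y ^+ k.
Proof.
move=> g_gt0 g_le1 x_ge0 gx_le /andP [m_le_k k_le_h].
have gx_ge0 : 0 <= g * x by rewrite mulr_ge0 // ltW.
rewrite -{2}(subnK m_le_k) exprD ler_wpM2r ?exprn_ge0 ?(le_trans gx_ge0) //.
apply: le_trans (_ : (g * x) ^+ (k - m) <= _); last first.
  by apply: (lerXn2r (k - m)); rewrite ?nnegrE ?(le_trans gx_ge0).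
rewrite exprMn ler_wpM2r ?exprn_ge0 //.
by apply: ler_wiXn2l; [exact: ltW | exact: g_le1 | exact: leq_trans (leq_subr m k) k_le_h].
Qed.

Lemma card_tuples_in (T : finType) (A : {set T}) k :
  #|[set t : k.-tuple T | all (fun u => u \in A) t]| = (#|A| ^ k)%N.
Proof.
pose f (t : k.-tuple T) : {ffun 'I_k -> T} := [ffun i => tnth t i].
have f_inj : injective f.
  by move=> t1 t2 /ffunP eq_f; apply: eq_from_tnth => i; have := eq_f i; rewrite !ffunE.
rewrite -(card_imset _ f_inj) -[in RHS](card_ord k) -card_ffun_on.
apply: eq_card => g; apply/imsetP/ffun_onP => [[t] | g_in_A].
  by rewrite inE => /allP t_in_A -> i; rewrite ffunE t_in_A ?mem_tnth.
exists [tuple g i | i < k]; last by apply/ffunP => i; rewrite !ffunE tnth_mktuple.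
by rewrite inE; apply/allP => _ /mapP [i _ ->]; apply: g_in_A.
Qed.

Section DoubleCounting.
Variables (T : finType) (G : rel T).
Hypothesis G_sym : symmetric G.

Lemma all_in_nbhdC (S t : seq T) :
  all (fun u => u \in nbhd G S) t = all (fun u => u \in nbhd G t) S.
Proof.
by apply/allP/allP => sub x x_in; rewrite inE; apply/allP => y y_in;
  have := sub y y_in; rewrite inE => /allP/(_ x x_in); rewrite G_sym.
Qed.

Lemma double_count_nbhd j k (P : pred (k.-tuple T)) :
  (\sum_(S : j.-tuple T) #|[set t : k.-tuple T | all (fun u => u \in nbhd G S) t && P t]|
   = \sum_(t : k.-tuple T | P t) #|nbhd G t| ^ j)%N.
Proof.
transitivity (\sum_(S : j.-tuple T) \sum_(t : k.-tuple T)
                (all (fun u => u \in nbhd G S) t && P t : nat))%N.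
  by apply: eq_bigr => S _; rewrite -sum1_card big_mkcond; apply: eq_bigr => t _; rewrite inE.
rewrite exchange_big [RHS]big_mkcond; apply: eq_bigr => t _.
case: (P t); last by rewrite big1 // => S _; rewrite andbF.
rewrite -card_tuples_in -sum1_card [RHS]big_mkcond; apply: eq_bigr => S _.
by rewrite inE andbT all_in_nbhdC.
Qed.

Lemma sum_card_nbhd j :
  (\sum_(S : j.-tuple T) #|nbhd G S| = \sum_(v : T) #|nbhd G [:: v]| ^ j)%N.
Proof.
have thead_tupleK (t : 1.-tuple T) : [:: thead t] = t by case: t => [[|x []]].
rewrite [RHS](reindex (fun t : 1.-tuple T => thead t)) /=; last first.
  by exists (fun v => [tuple v]) => [t|v] _; first by apply: val_inj; exact: thead_tupleK.
under [RHS]eq_bigr do rewrite thead_tupleK.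
rewrite -(double_count_nbhd j predT); apply: eq_bigr => S _.
by rewrite -[LHS]expn1 -card_tuples_in; apply: eq_card => t; rewrite !inE andbT.
Qed.
End DoubleCounting.

Lemma double_nedges_le_sum_deg (T : finType) (G : rel T) :
  symmetric G -> irreflexive G ->
  (2 * nedges G <= \sum_(v : T) #|nbhd G [:: v]|)%N.
Proof.
move=> G_sym G_irr.
have -> : (\sum_(v : T) #|nbhd G [:: v]| = \sum_(z : T * T | G z.1 z.2) 1)%N.
  transitivity (\sum_(v : T) \sum_(u : T) (G v u : nat))%N.
    apply: eq_bigr => v _; rewrite -sum1_card big_mkcond /=.
    by apply: eq_bigr => u _; rewrite !inE /=; case: (G v u).
  by rewrite pair_big [RHS]big_mkcond.
rewrite (partition_big (fun z : T * T => [set z.1; z.2]) (mem (edges G))) /=; last first.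
  move=> [x y] /= Gxy; rewrite inE.
  by apply/existsP; exists x; apply/existsP; exists y; rewrite Gxy eqxx.
rewrite /nedges -sum1_card big_distrr /= muln1; apply: leq_sum => A.
rewrite inE => /existsP [x /existsP [y /andP [Gxy /eqP ->]]].
have x_neq_y : x != y by apply: contraTneq Gxy => ->; rewrite G_irr.
rewrite (sum1_card [pred z : T * T | G z.1 z.2 && ([set z.1; z.2] == [set x; y])]).
apply: leq_trans (subset_leq_card (_ : [set (x, y); (y, x)] \subset _)).
  by rewrite cards2 xpair_eqE (negbTE x_neq_y).
apply/subsetP => z; rewrite !inE => /orP [] /eqP -> /=; first by rewrite Gxy eqxx.
by rewrite G_sym Gxy setUC eqxx.
Qed.

Section StarCount.
Variables (R : realType) (T : finType) (G : rel T).
Hypotheses (G_sym : symmetric G) (G_irr : irreflexive G) (T_gt0 : (0 < #|T|)%N).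

Lemma sum_card_nbhd_ge j : (0 < j)%N ->
  (#|T| ^ j.+1)%:R * density G R ^+ j <= \sum_(S : j.-tuple T) (#|nbhd G S|%:R : R).
Proof.
case: j => // q _; set n : R := #|T|%:R.
have n_gt0 : 0 < n by rewrite ltr0n.
rewrite -natr_sum sum_card_nbhd // natr_sum.
under eq_bigr do rewrite natrX.
have density_pow : (#|T| ^ q.+2)%:R * density G R ^+ q.+1 * n ^+ q
    = ((2 * nedges G)%:R : R) ^+ q.+1.
  rewrite /density !natrX -/n expr_div_n -exprM.
  rewrite (_ : (2 * q.+1)%N = (q.+2 + q)%N) ?exprD; last by lia.
  by field; rewrite !expf_neq0 ?lt0r_neq0.
rewrite -(ler_pM2r (exprn_gt0 q n_gt0)) density_pow mulrC.
have := @power_mean _ _ (fun v => #|nbhd G [:: v]|%:R : R) q (fun v => ler0n _ _).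
apply: le_trans; apply: (lerXn2r q.+1); rewrite ?nnegrE ?ler0n ?sumr_ge0 //.
by rewrite -natr_sum ler_nat double_nedges_le_sum_deg.
Qed.
End StarCount.

(* [shrink] solves [g / 2 + h.+1 * (shrink g / (beta * (g / 2) ^+ h)) = g], so
   that [bad_massS_le] with [g / 2] in place of [g] turns the tolerance [shrink g]
   for [i]-goodness into the tolerance [g] for [i.+1]-goodness. *)
Definition shrink (R : realFieldType) (beta : R) (h : nat) (x : R) : R :=
  x * beta * (x / 2) ^+ h / (2 * h.+1%:R).

Definition tolerance (R : realFieldType) (beta : R) (h i : nat) : R :=
  iter (h - i) (shrink beta h) beta.

Section Tolerance.
Variables (R : realFieldType) (beta : R) (h : nat).
Hypotheses (beta_gt0 : 0 < beta) (beta_lt1 : beta < 1).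

Lemma shrink_gt0 (x : R) : 0 < x -> 0 < shrink beta h x.
Proof. by move=> x_gt0; rewrite /shrink divr_gt0 ?mulr_gt0 ?exprn_gt0 ?divr_gt0 ?ltr0n. Qed.

Lemma shrink_le_half (x : R) : 0 < x -> x <= 1 -> shrink beta h x <= x / 2.
Proof.
move=> x_gt0 x_le1.
have y_ge0 : 0 <= beta * (x / 2) ^+ h by rewrite mulr_ge0 ?exprn_ge0 ?divr_ge0 ?ltW.
have y_le1 : beta * (x / 2) ^+ h <= 1.
  by rewrite mulr_ile1 ?exprn_ge0 ?exprn_ile1 ?divr_ge0 ?ltW //; lra.
have h_ge1 : 1 <= h.+1%:R :> R by rewrite ler1n.
rewrite /shrink ler_pdivrMr ?mulr_gt0 ?ltr0n // -mulrA.
set y := beta * _ in y_ge0 y_le1 *; set H := h.+1%:R in h_ge1 *.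
rewrite (_ : x / 2 * (2 * H) = x * H); last by field.
by apply: ler_pM => //; [exact: ltW | exact: le_trans y_le1 h_ge1].
Qed.

Lemma iter_shrink_bounds k (x : R) : 0 < x -> x <= 1 ->
  0 < iter k (shrink beta h) x <= x.
Proof.
move=> x_gt0 x_le1; elim: k => [|k /andP [IH_gt0 IH_le]] /=; first by rewrite x_gt0 lexx.
rewrite shrink_gt0 //= (le_trans (shrink_le_half IH_gt0 _)) ?(le_trans IH_le) //.
by rewrite ler_pdivrMr //; lra.
Qed.

Lemma tolerance_gt0 i : 0 < tolerance beta h i.
Proof. by case/andP: (iter_shrink_bounds (h - i) beta_gt0 (ltW beta_lt1)). Qed.

Lemma tolerance_le_beta i : tolerance beta h i <= beta.
Proof. by case/andP: (iter_shrink_bounds (h - i) beta_gt0 (ltW beta_lt1)). Qed.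

Lemma toleranceS i : (i < h)%N ->
  tolerance beta h i = shrink beta h (tolerance beta h i.+1).
Proof. by move=> i_lt_h; rewrite /tolerance -(subnSK i_lt_h). Qed.

Lemma tolerance_le_half i : (i < h)%N ->
  tolerance beta h i <= tolerance beta h i.+1 / 2.
Proof.
move=> i_lt_h; rewrite toleranceS // shrink_le_half ?tolerance_gt0 //.
exact: le_trans (tolerance_le_beta _) (ltW beta_lt1).
Qed.

Lemma tolerance_le_succ i : tolerance beta h i <= tolerance beta h i.+1.
Proof.
case: (ltnP i h) => [i_lt_h | h_le_i].
  by apply: le_trans (tolerance_le_half i_lt_h) _; have := tolerance_gt0 i.+1; lra.
rewrite /tolerance; have /eqP -> : (h - i == 0)%N by rewrite subn_eq0.
by have /eqP -> : (h - i.+1 == 0)%N by rewrite subn_eq0 leqW.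
Qed.

Lemma tolerance0_le i : tolerance beta h 0 <= tolerance beta h i.
Proof. by elim: i => // i IH; apply: le_trans IH (tolerance_le_succ i). Qed.

Lemma tolerance_rec i : (i < h)%N ->
  tolerance beta h i.+1 / 2
    + h.+1%:R * (tolerance beta h i / (beta * (tolerance beta h i.+1 / 2) ^+ h))
  = tolerance beta h i.+1.
Proof.
move=> i_lt_h; rewrite (toleranceS i_lt_h) /shrink.
have t_gt0 := tolerance_gt0 i.+1.
by field; rewrite ?expf_neq0 ?mulf_neq0 ?lt0r_neq0 ?invr_gt0 ?divr_gt0 ?nat1r ?ltr0n.
Qed.
End Tolerance.

Section BadMass.
Variables (R : realType) (T : finType) (G : rel T) (alpha beta : R) (h : nat).
Hypotheses (G_sym : symmetric G) (G_irr : irreflexive G) (T_gt0 : (0 < #|T|)%N).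
Hypotheses (density_gt0 : 0 < density G R) (beta_gt0 : 0 < beta) (beta_lt1 : beta < 1).

Local Notation d S := (#|nbhd G S|%:R : R).
Local Notation p := (density G R).
Local Notation n := (#|T|%:R : R).

(* [mass j m = n ^+ j * (p ^+ j * n) ^+ m] is the sum of [d S ^+ m] over
   the [j]-tuples [S] if every neighbourhood had the typical size [p ^+ j * n]. *)
Definition mass j m : R := p ^+ (j * m) * n ^+ (j + m).

Definition bad_mass i j m : R :=
  \sum_(S : j.-tuple T | ~~ good G alpha beta h i S) d S ^+ m.

Definition bad_mass_le i eps : Prop :=
  forall j m, (0 < m <= j)%N -> (j <= h)%N -> bad_mass i j m <= eps * mass j m.

Let n_gt0 : 0 < n. Proof. by rewrite ltr0n. Qed.

Lemma mass_ge0 j m : 0 <= mass j m.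
Proof. by rewrite mulr_ge0 ?exprn_ge0 ?ltW ?n_gt0. Qed.

Lemma mass_uniform a j m : n ^+ j * (a * p ^+ j * n) ^+ m = a ^+ m * mass j m.
Proof.
rewrite /mass; move: (density G R) (#|T|%:R : R) => q c.
by rewrite !exprMn -exprM exprD; ring.
Qed.

Lemma mass_shift j m k : (m <= k)%N -> mass k j = (p ^+ j * n) ^+ (k - m) * mass j m.
Proof.
move=> m_le_k; rewrite /mass; move: (density G R) (#|T|%:R : R) => q c.
rewrite exprMn -exprM mulrACA -!exprD.
by congr (_ ^+ _ * _ ^+ _); nia.
Qed.

Lemma sum_small_le a j m (P : pred (j.-tuple T)) :
  0 <= a -> a <= 1 -> (0 < m)%N -> (forall S, P S -> d S <= a * p ^+ j * n) ->
  \sum_(S | P S) d S ^+ m <= a * mass j m.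
Proof.
move=> a_ge0 a_le1 m_gt0 small.
have c_ge0 : 0 <= a * p ^+ j * n by rewrite !mulr_ge0 ?exprn_ge0 // ltW ?n_gt0.
apply: le_trans (ler_sum_card_mul (c := (a * p ^+ j * n) ^+ m) _ _) _.
- by move=> S /small d_le; apply: (lerXn2r m); rewrite ?nnegrE.
- exact: exprn_ge0.
by rewrite card_tuple natrX mass_uniform ler_wpM2r ?mass_ge0 ?ler_iXnr.
Qed.

Lemma bad_mass0_le : 0 <= alpha -> alpha <= 1 -> bad_mass_le 0 alpha.
Proof.
move=> alpha_ge0 alpha_le1 j m /andP [m_gt0 _] _.
apply: sum_small_le => // S; rewrite /= /good0 size_tuple -ltNge; exact: ltW.
Qed.

Definition fails_at i k (S : seq T) : bool :=
  (size S <= k)%N &&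
  ~~ ((1 - beta) * (#|nbhd G S| ^ k)%:R
        <= #|[set t : k.-tuple T | all (fun u => u \in nbhd G S) t
                                   && good G alpha beta h i t]|%:R).

Lemma not_goodS_fails_at i (S : seq T) :
  (size S <= h)%N -> good0 G alpha S -> ~~ good G alpha beta h i.+1 S ->
  exists k : 'I_h.+1, fails_at i k S.
Proof.
move=> S_le_h S_good0; rewrite /= S_le_h S_good0 negb_forall => /existsP [k].
by rewrite negb_imply => k_fails; exists k.
Qed.

Lemma fails_at_many_bad i k (S : seq T) : fails_at i k S ->
  beta * d S ^+ k
    < #|[set t : k.-tuple T | all (fun u => u \in nbhd G S) t
                              && ~~ good G alpha beta h i t]|%:R.
Proof.
case/andP => _; rewrite -ltNge.
have split_good : (#|[set t : k.-tuple T | all (fun u => u \in nbhd G S) t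
                                           && good G alpha beta h i t]|
    + #|[set t : k.-tuple T | all (fun u => u \in nbhd G S) t
                              && ~~ good G alpha beta h i t]|
    = #|nbhd G S| ^ k)%N.
  rewrite -card_tuples_in -(cardsID [set t : k.-tuple T | good G alpha beta h i t]
    [set t : k.-tuple T | all (fun u => u \in nbhd G S) t]).
  by congr (_ + _); apply: eq_card => t; rewrite !inE andbC.
move/(congr1 (fun k => k%:R : R)): split_good; rewrite natrD !natrX; lra.
Qed.

Lemma large_fails_mass_le i eps g j m (k : 'I_h.+1) :
  bad_mass_le i eps -> 0 <= eps -> 0 < g -> g <= 1 -> (0 < m <= j)%N ->
  \sum_(S : j.-tuple T | fails_at i k S && (g * p ^+ j * n <= d S)) d S ^+ m
    <= eps / (beta * g ^+ h) * mass j m.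
Proof.
move=> bad_le eps_ge0 g_gt0 g_le1 /andP [m_gt0 m_le_j].
have c_gt0 : 0 < beta * g ^+ h by rewrite mulr_gt0 ?exprn_gt0.
have [k_lt_j | j_le_k] := ltnP k j.
  rewrite big_pred0 => [|S]; first by rewrite mulr_ge0 ?mass_ge0 // divr_ge0 // ltW.
  by rewrite /fails_at size_tuple leqNgt k_lt_j.
have k_le_h : (k <= h)%N by rewrite -ltnS.
have m_le_k := leq_trans m_le_j j_le_k.
set Q := (p ^+ j * n) ^+ (k - m).
have Q_gt0 : 0 < Q by rewrite exprn_gt0 ?mulr_gt0 ?exprn_gt0 ?n_gt0.
rewrite -(ler_pM2l (mulr_gt0 c_gt0 Q_gt0)).
rewrite (_ : _ * (eps / _ * _) = eps * mass k j); last first.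
  by rewrite (mass_shift j m_le_k) -/Q; field; rewrite expf_neq0 ?lt0r_neq0.
apply: le_trans (bad_le k j _ k_le_h); last by rewrite (leq_trans m_gt0 m_le_j).
rewrite /bad_mass; under [X in _ <= X]eq_bigr do rewrite -natrX.
rewrite -natr_sum -double_count_nbhd // natr_sum.
rewrite mulr_sumr [X in X <= _]big_mkcond /=; apply: ler_sum => S _.
case: ifP => [/andP [S_fails S_large] | _]; last exact: ler0n.
apply: le_trans (ltW (fails_at_many_bad S_fails)).
rewrite -!mulrA ler_wpM2l ?(ltW beta_gt0) // !mulrA.
apply: (expr_le_of_scaled_le (x := p ^+ j * n)) => //; last by rewrite m_le_k.
  by rewrite mulr_ge0 ?exprn_ge0 // ltW ?n_gt0.
by rewrite mulrA.
Qed.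

Lemma bad_massS_le i eps g :
  bad_mass_le i eps -> 0 <= eps -> 0 < g -> g <= 1 -> alpha <= g ->
  bad_mass_le i.+1 (g + h.+1%:R * (eps / (beta * g ^+ h))).
Proof.
move=> bad_le eps_ge0 g_gt0 g_le1 alpha_le_g j m m_j j_le_h.
have /andP [m_gt0 _] := m_j.
rewrite /bad_mass (bigID (fun S : j.-tuple T => d S < g * p ^+ j * n)) /= mulrDl.
apply: lerD.
  apply: sum_small_le => //; first exact: ltW.
  by move=> S /andP [_ /ltW].
apply: le_trans (ler_sum_cover (Q := fun (k : 'I_h.+1) (S : j.-tuple T) =>
  fails_at i k S && (g * p ^+ j * n <= d S)) _ _) _.
- by move=> S; rewrite exprn_ge0.
- move=> S /andP [S_bad]; rewrite -leNgt => S_large.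
  have S_good0 : good0 G alpha S.
    rewrite /good0 size_tuple; apply: le_trans S_large.
    by rewrite !ler_wpM2r ?exprn_ge0 ?ler0n // ltW.
  have S_le_h : (size S <= h)%N by rewrite size_tuple.
  have [k k_fails] := not_goodS_fails_at S_le_h S_good0 S_bad.
  by exists k; rewrite k_fails.
apply: le_trans (ler_sum _ (fun k _ => large_fails_mass_le k bad_le eps_ge0 g_gt0 g_le1 m_j)) _.
by rewrite sumr_const card_ord mulr_natl mulrnAl.
Qed.

Lemma bad_mass_tolerance i : 0 <= alpha -> alpha <= tolerance beta h 0 ->
  (i <= h)%N -> bad_mass_le i (tolerance beta h i).
Proof.
move=> alpha_ge0 alpha_le; elim: i => [_ | i IH i_lt_h].
  have alpha_le1 : alpha <= 1.
    by rewrite (le_trans alpha_le) ?(le_trans (tolerance_le_beta h beta_gt0 beta_lt1 0)) ?ltW.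
  move=> j m m_j j_le_h; apply: le_trans (bad_mass0_le alpha_ge0 alpha_le1 m_j j_le_h) _.
  by rewrite ler_wpM2r ?mass_ge0.
have t_gt0 := tolerance_gt0 h beta_gt0 beta_lt1.
rewrite -(tolerance_rec beta_gt0 beta_lt1 i_lt_h).
apply: bad_massS_le (IH (ltnW i_lt_h)) _ _ _ _.
- exact: ltW.
- by rewrite divr_gt0.
- by have := tolerance_le_beta h beta_gt0 beta_lt1 i.+1; have := beta_lt1; lra.
apply: le_trans alpha_le (le_trans (tolerance0_le h beta_gt0 beta_lt1 i) _).
exact: tolerance_le_half.
Qed.

Lemma good_mass_ge i j : 0 <= alpha -> alpha <= tolerance beta h 0 ->
  (i <= h)%N -> (0 < j <= h)%N ->
  (1 - beta) * (#|T| ^ j.+1)%:R * p ^+ j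
    <= \sum_(S : j.-tuple T | good G alpha beta h i S) d S.
Proof.
move=> alpha_ge0 alpha_le i_le_h /andP [j_gt0 j_le_h].
have total := sum_card_nbhd_ge R G_sym G_irr T_gt0 j_gt0.
rewrite (bigID (fun S : j.-tuple T => good G alpha beta h i S)) /= in total.
have bad : \sum_(S : j.-tuple T | ~~ good G alpha beta h i S) d S
    <= beta * (p ^+ j * n ^+ j.+1).
  have j_1 : (0 < 1 <= j)%N by rewrite j_gt0.
  apply: le_trans (bad_mass_tolerance alpha_ge0 alpha_le i_le_h j_1 j_le_h) _.
  rewrite /mass muln1 addn1 ler_wpM2r ?tolerance_le_beta //.
  by rewrite mulr_ge0 ?exprn_ge0 // ltW ?n_gt0.
rewrite natrX in total *; have := beta_lt1; lra.
Qed.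

Lemma exists_good_large_nbhd i j : 0 <= alpha -> alpha <= tolerance beta h 0 ->
  (i <= h)%N -> (0 < j <= h)%N ->
  exists S : seq T,
    [/\ size S = j, good G alpha beta h i S & (1 - beta) * p ^+ j * n <= d S].
Proof.
move=> alpha_ge0 alpha_le i_le_h j_bounds.
have c_gt0 : 0 < (1 - beta) * p ^+ j * n.
  by rewrite !mulr_gt0 ?exprn_gt0 ?subr_gt0.
have := good_mass_ge alpha_ge0 alpha_le i_le_h j_bounds.
rewrite -[X in X <= _](_ : #|{: j.-tuple T}|%:R * ((1 - beta) * p ^+ j * n) = _).
  case/(exists_ge_of_card_mul_le _ c_gt0) => [|S S_good S_large].
    by rewrite card_tuple expn_gt0 T_gt0.
  by exists S; rewrite size_tuple.
by rewrite card_tuple !natrX exprSr; ring.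
Qed.
End BadMass.

Lemma density_eq0_good (R : realType) (T : finType) (G : rel T) (alpha beta : R) h i
    (S : seq T) :
  density G R = 0 -> (0 < size S <= h)%N -> good G alpha beta h i S.
Proof.
move=> density0 /andP [S_gt0 S_le_h].
have no_edge u v : ~~ G u v.
  apply: contra_eqN density0 => Guv.
  have T_gt0 : (0 < #|T|)%N by apply/card_gt0P; exists u.
  have edges_gt0 : (0 < nedges G)%N.
    apply/card_gt0P; exists [set u; v]; rewrite inE.
    by apply/existsP; exists u; apply/existsP; exists v; rewrite Guv eqxx.
  by rewrite mulf_neq0 ?invr_eq0 ?pnatr_eq0 -?lt0n ?muln_gt0 ?expn_gt0 ?T_gt0 ?edges_gt0.
have nbhd0 : nbhd G S = set0.
  case: S S_gt0 {S_le_h} => // x S _; apply/setP => v.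
  by rewrite !inE /= (negbTE (no_edge x v)).
have S_good0 : good0 G alpha S.
  by rewrite /good0 density0 expr0n eqn0Ngt S_gt0 mulr0 mul0r ler0n.
case: i => [|i] //=; rewrite S_le_h S_good0; apply/forallP => k; apply/implyP => S_le_k.
by rewrite nbhd0 cards0 exp0n ?(leq_trans S_gt0) // mulr0 ler0n.
Qed.

Theorem theorem3p3 (R : realType) (h : nat) (beta : R) :
  (0 < h)%N -> 0 < beta -> beta < 1 ->
  exists2 alpha : R, 0 < alpha &
    forall (T : finType) (G : rel T),
      symmetric G -> irreflexive G ->
      forall i j : nat, (1 <= i <= h)%N -> (1 <= j <= h)%N ->
        ((1 - beta) * (#|T| ^ j.+1)%:R * density G R ^+ j
           <= \sum_(S : j.-tuple T | good G alpha beta h i S)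
                (#|nbhd G S|%:R : R))
        /\ ((0 < #|T|)%N ->
            exists S : seq T, [/\ size S = j, good G alpha beta h i S &
              (1 - beta) * density G R ^+ j * #|T|%:R <= #|nbhd G S|%:R]).
Proof.
move=> _ beta_gt0 beta_lt1.
have alpha_gt0 := tolerance_gt0 h beta_gt0 beta_lt1 0.
exists (tolerance beta h 0) => // T G G_sym G_irr i j /andP [_ i_le_h] j_bounds.
have /andP [j_gt0 _] := j_bounds.
have [T0 | T_gt0] := posnP #|T|.
  by split; [rewrite T0 exp0n // mulr0 mul0r; exact: sumr_ge0 | rewrite T0].
have /orP [/eqP density0 | density_gt0] : (density G R == 0) || (0 < density G R).
  by rewrite -le0r divr_ge0.
  split=> [|_]; first by rewrite density0 expr0n (gtn_eqF j_gt0) mulr0; exact: sumr_ge0.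
  case/card_gt0P: T_gt0 => x _; exists (nseq j x).
  rewrite size_nseq density_eq0_good ?size_nseq // density0 expr0n (gtn_eqF j_gt0).
  by rewrite mulr0 mul0r.
have alpha_ge0 := ltW alpha_gt0; have alpha_le := lexx (tolerance beta h 0).
split=> [|_].
  exact (good_mass_ge G_sym G_irr T_gt0 density_gt0 beta_gt0 beta_lt1 alpha_ge0 alpha_le
    i_le_h j_bounds).
exact (exists_good_large_nbhd G_sym G_irr T_gt0 density_gt0 beta_gt0 beta_lt1 alpha_ge0
  alpha_le i_le_h j_bounds).
Qed.
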